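(* Let $p>1$, $\psi(w)=\frac1p\|w\|_p^p$ on $\mathbb{R}^d$, and let $L:\mathbb{R}^d\to\mathbb{R}$ be differentiable and convex. Let $w_{t+1}$ be obtained from $w_t$ by the mirror descent update $\nabla\psi(w_{t+1})=\nabla\psi(w_t)-\eta\nabla L(w_t)$, where $\eta>0$ is such that $\psi-\eta L$ is convex. Then $$\frac{p-1}{p}\|w_{t+1}\|_p^p-\frac{p-1}{p}\|w_t\|_p^p+\eta L(w_{t+1})-\eta L(w_t)\le\langle-\eta\nabla L(w_t),w_t\rangle.$$
   Context: In the paper $L(w)=\frac1n\sum_i\ell(y_i\langle w,x_i\rangle)$ with $\ell$ differentiable, decreasing and convex. *)

From HB Require Import structures.
From mathcomp Require Import all_boot all_order all_algebra.
From mathcomp Require Import all_classical all_reals all_analysis.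
Set Implicit Arguments. Unset Strict Implicit. Unset Printing Implicit Defensive.
Import Order.TTheory GRing.Theory Num.Theory.
Import numFieldNormedType.Exports.
Local Open Scope ring_scope.

Definition ebasis (R : realType) (d : nat) (i : 'I_d) : 'rV[R]_d := delta_mx 0 i.

Definition dotp (R : realType) (d : nat) (u v : 'rV[R]_d) : R :=
  \sum_(i < d) u 0 i * v 0 i.

Definition grad (R : realType) (d : nat) (f : 'rV[R]_d -> R) (w : 'rV[R]_d) : 'rV[R]_d :=
  \row_(i < d) derive f w (ebasis R i).

Definition convex_fun (R : realType) (d : nat) (f : 'rV[R]_d -> R) : Prop :=
  forall (x y : 'rV[R]_d) (t : R), 0 <= t -> t <= 1 ->
    f (t *: x + (1 - t) *: y) <= t * f x + (1 - t) * f y.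

Definition pnorm_pow (R : realType) (d : nat) (p : R) (w : 'rV[R]_d) : R :=
  \sum_(i < d) `|w 0 i| `^ p.

Definition psi (R : realType) (d : nat) (p : R) (w : 'rV[R]_d) : R :=
  p^-1 * pnorm_pow p w.

(* The function F = psi - eta L is convex, so F(w') - F(w) dominates the
   directional derivative of F at w toward w', that is <grad psi(w) - eta grad L(w), w' - w>,
   and by the update rule this vector is grad psi(w').  Since psi is positively
   homogeneous of degree p, Euler's identity <grad psi(x), x> = ||x||_p^p evaluates
   <grad psi(w'), w'> and, after substituting the update once more, <grad psi(w'), w>;
   the claimed inequality is what remains after rearranging. *)
From HB Require Import structures.
From mathcomp Require Import all_boot all_order all_algebra.
From mathcomp Require Import all_classical all_reals all_analysis.
From mathcomp Require Import lra ring.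
Set Implicit Arguments. Unset Strict Implicit. Unset Printing Implicit Defensive.
Import Order.TTheory GRing.Theory Num.Theory.
Import numFieldNormedType.Exports.
Local Open Scope ring_scope.

Section Dotp.
Variables (R : realType) (d : nat).
Implicit Types u v w : 'rV[R]_d.

Lemma dotpC u v : dotp u v = dotp v u.
Proof. by apply: eq_bigr => i _; rewrite mulrC. Qed.

Lemma dotpBl u v w : dotp (u - v) w = dotp u w - dotp v w.
Proof. by rewrite /dotp -sumrB; apply: eq_bigr => i _; rewrite !mxE mulrBl. Qed.

Lemma dotpBr u v w : dotp u (v - w) = dotp u v - dotp u w.
Proof. by rewrite /dotp -sumrB; apply: eq_bigr => i _; rewrite !mxE mulrBr. Qed.

Lemma dotpNr u v : dotp u (- v) = - dotp u v.
Proof. by rewrite /dotp -sumrN; apply: eq_bigr => i _; rewrite !mxE mulrN. Qed.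

Lemma dotpZr (a : R) u v : dotp u (a *: v) = a * dotp u v.
Proof. by rewrite /dotp mulr_sumr; apply: eq_bigr => i _; rewrite !mxE mulrCA. Qed.

End Dotp.

Section Derivatives.
Variable R : realType.
Local Open Scope classical_set_scope.

Lemma is_derive_coord (m n : nat) (a v : 'M[R]_(m, n)) i j :
  is_derive a v (fun M : 'M[R]_(m, n) => M i j) (v i j).
Proof.
have quotient_cvg : (fun h : R => h^-1 *: (((fun M : 'M[R]_(m, n) => M i j) \o shift a)
    (h *: v) - a i j)) @ 0^' --> v i j.
  apply: (@cvg_trans _ ((fun=> v i j) @ (0 : R)^')); last exact: cvg_cst.
  apply: near_eq_cvg; near=> h.
  have h0 : h != 0 by near: h; exact: nbhs_dnbhs_neq.
  by rewrite /= !mxE addrK /GRing.scale /= mulrA mulVf // mul1r.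
exact: DeriveDef (cvgP _ quotient_cvg) (cvg_lim _ quotient_cvg).
Unshelve. all: by end_near. Qed.

Lemma is_derive_comp (V : normedModType R) (g : R -> R) (c : V -> R)
    (a v : V) (dg dc : R) :
  is_derive (c a) 1 g dg -> is_derive a v c dc -> differentiable c a ->
  is_derive a v (g \o c) (dc * dg).
Proof.
move=> [gd gE] [_ cE] cdiff.
have gdiff : differentiable g (c a) by apply/derivable1_diffP.
apply: DeriveDef; first exact/diff_derivable/differentiable_comp.
rewrite deriveE; last exact: differentiable_comp.
by rewrite diff_comp //= -(deriveE v cdiff) cE deriv1E // derive1E gE.
Qed.

Lemma is_derive0_powR_norm (p : R) : 1 < p ->
  is_derive (0 : R) 1 (fun y : R => `|y| `^ p) 0.
Proof.
move=> p1; have p0 : p != 0 by rewrite gt_eqF // (lt_trans ltr01 p1).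
suff quotient_cvg0 : (fun h : R => h^-1 *: (((fun y : R => `|y| `^ p) \o shift 0)
    (h *: 1) - `|0 : R| `^ p)) @ 0^' --> 0.
  by apply: DeriveDef; [apply/cvg_ex; exists 0 | exact: cvg_lim quotient_cvg0].
apply/cvgr0Pnorm_lt => e e0.
(* the quotient has absolute value |h|^(p-1), which vanishes at 0 because p > 1 *)
have small_right : \forall a \near (0 : R)^'+, `|a `^ (p - 1)| < e.
  by move: e e0; apply/cvgr0Pnorm_lt; apply: powR_cvg0; rewrite subr_gt0.
rewrite near_withinE in small_right.
have small : \forall s \near (0 : R), 0 < `|s| -> `|(`|s|) `^ (p - 1)| < e.
  have := @norm_continuous _ R^o 0; rewrite /continuous_at /= normr0.
  by move=> /(_ _ small_right).
rewrite near_withinE; apply: filterS small => s small_s s0.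
have s_gt0 : 0 < `|s| by rewrite normr_gt0.
move: (small_s s_gt0); rewrite /= normr0 powR0 // subr0 addr0 /GRing.scale /= mulr1.
rewrite normrM normrV ?unitfE // !(ger0_norm (powR_ge0 _ _)).
by rewrite -(mulr_powRB1 (normr_ge0 s) (lt_trans ltr01 p1)) mulrA mulVf ?normr_eq0 // mul1r.
Qed.

Lemma is_derive_powR_norm (p x : R) : 1 < p ->
  is_derive x 1 (fun y : R => `|y| `^ p) (p * Num.sg x * `|x| `^ (p - 1)).
Proof.
move=> p1; case: (ltrgt0P x) => [x0|x0|->].
- rewrite gtr0_sg // mulr1; apply: near_eq_is_derive (is_derive1_powR p x0).
  by near=> y; rewrite gtr0_norm //; near: y; exact: lt_nbhsr.
- rewrite ltr0_sg // mulrN1 -mulrN1.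
  have nx : 0 < - x by rewrite oppr_gt0.
  have := is_derive1_comp (is_derive1_powR p nx) (is_deriveNid x 1).
  rewrite mulrAC; apply: near_eq_is_derive.
  by near=> y; rewrite /= ltr0_norm //; near: y; exact: lt_nbhsl.
- by rewrite sgr0 mulr0 mul0r; exact: is_derive0_powR_norm.
Unshelve. all: by end_near. Qed.

Lemma mul_sg_powR_norm (p x : R) : 0 < p ->
  x * (Num.sg x * `|x| `^ (p - 1)) = `|x| `^ p.
Proof.
by move=> p0; rewrite mulrA [x * _]mulrC -normrEsg mulr_powRB1.
Qed.

Lemma is_derive_grad (d : nat) (f : 'rV[R]_d -> R) (a v : 'rV[R]_d) :
  differentiable f a -> is_derive a v f (dotp v (grad f a)).
Proof.
move=> fdiff; have fder : derivable f a v by exact: diff_derivable.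
apply: (is_derive_eq (derivableP fder)).
rewrite deriveE // {1}(row_sum_delta v) linear_sum.
by apply: eq_bigr => i _; rewrite linearZ /grad mxE deriveE.
Qed.

Lemma convex_fun_derive_le (d : nat) (F : 'rV[R]_d -> R) (w w' : 'rV[R]_d) (dF : R) :
  convex_fun F -> is_derive w (w' - w) F dF -> dF <= F w' - F w.
Proof.
move=> Fconvex [Fder <-].
pose quotient := fun h : R => h^-1 *: ((F \o shift w) (h *: (w' - w)) - F w).
have right_cvg : quotient @ 0^'+ --> 'D_(w' - w) F w by exact: cvg_dnbhs_at_right.
rewrite -(cvg_lim _ right_cvg); last exact: norm_hausdorff.
apply: limr_le; first by apply/cvg_ex; exists ('D_(w' - w) F w).
near=> t.
have t0 : 0 < t by near: t; exact: nbhs_right_gt.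
have t1 : t <= 1 by near: t; exact: nbhs_right_le.
have chord : t *: (w' - w) + w = t *: w' + (1 - t) *: w.
  by rewrite scalerBr scalerBl scale1r addrA addrAC.
have := Fconvex w' w t (ltW t0) t1; rewrite -chord => Fchord.
change (t^-1 * (F (t *: (w' - w) + w) - F w) <= F w' - F w).
rewrite ler_pdivrMl //; lra.
Unshelve. all: by end_near. Qed.

End Derivatives.

Section Psi.
Variables (R : realType) (d : nat) (p : R).
Hypothesis p_gt1 : 1 < p.

Let p_gt0 : 0 < p. Proof. exact: lt_trans ltr01 p_gt1. Qed.

Lemma is_derive_psi (a v : 'rV[R]_d) :
  is_derive a v (psi p) (\sum_(j < d) v 0 j * (Num.sg (a 0 j) * `|a 0 j| `^ (p - 1))).
Proof.
have -> : psi p = p^-1 \*: \sum_(j < d) ((fun y : R => `|y| `^ p) \o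
    (fun w : 'rV[R]_d => w 0 j)).
  by apply/funext => w; rewrite /psi /pnorm_pow fct_sumE.
apply: is_derive_eq.
  apply: is_deriveZ; apply: is_derive_sum => j; apply: is_derive_comp.
  - exact: is_derive_powR_norm.
  - exact: is_derive_coord.
  - exact: differentiable_coord.
rewrite /GRing.scale /= mulr_sumr; apply: eq_bigr => j _.
by rewrite -!mulrA mulrCA mulKf ?gt_eqF.
Qed.

Lemma grad_psiE (a : 'rV[R]_d) i :
  grad (psi p) a 0 i = Num.sg (a 0 i) * `|a 0 i| `^ (p - 1).
Proof.
rewrite /grad mxE; have [_ ->] := is_derive_psi a (ebasis R i).
rewrite (bigD1 i) //= big1 ?addr0.
  by rewrite /ebasis mxE !eqxx mul1r.
by move=> j ji; rewrite /ebasis mxE (negbTE ji) andbF mul0r.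
Qed.

Lemma is_derive_psi_grad (a v : 'rV[R]_d) :
  is_derive a v (psi p) (dotp v (grad (psi p) a)).
Proof.
apply: (is_derive_eq (is_derive_psi a v)).
by apply: eq_bigr => j _; rewrite grad_psiE.
Qed.

Lemma dotp_grad_psi (a : 'rV[R]_d) : dotp a (grad (psi p) a) = pnorm_pow p a.
Proof. by apply: eq_bigr => i _; rewrite grad_psiE mul_sg_powR_norm. Qed.

End Psi.

Theorem lemma6 (R : realType) (d : nat) (p eta : R) (L : 'rV[R]_d -> R)
  (w w' : 'rV[R]_d) :
  1 < p ->
  (forall x : 'rV[R]_d, differentiable L x) ->
  convex_fun L ->
  0 < eta ->
  convex_fun (fun x => psi p x - eta * L x) ->
  grad (psi p) w' = grad (psi p) w - eta *: grad L w ->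
  (p - 1) / p * pnorm_pow p w' - (p - 1) / p * pnorm_pow p w
    + eta * L w' - eta * L w
  <= dotp (- (eta *: grad L w)) w.
Proof.
move=> p1 Ldiff _ _ Fconvex update.
have Fder : is_derive w (w' - w) (fun x => psi p x - eta * L x)
    (dotp (w' - w) (grad (psi p) w')).
  have -> : (fun x => psi p x - eta * L x) = psi p - eta \*: L by apply/funext.
  rewrite update dotpBr dotpZr; apply: is_deriveB.
  - exact: is_derive_psi_grad.
  - exact/is_deriveZ/is_derive_grad.
have := convex_fun_derive_le Fconvex Fder.
rewrite dotpBl dotp_grad_psi // update dotpBr dotpZr dotp_grad_psi //.
rewrite [dotp (- _) w]dotpC dotpNr dotpZr /psi.
have -> : (p - 1) / p = 1 - p^-1 by rewrite mulrBl divff ?mul1r // gt_eqF // (lt_trans ltr01 p1).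
lra.
Qed.
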